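(* The group $G=\langle\sigma_1,\sigma_2,\sigma_3\rangle$ of birational transformations of $\overline{\mathcal{S}}(\theta)$ is a universal Coxeter group of rank three on the generators $\sigma_1,\sigma_2,\sigma_3$; that is, there are no relations other than those generated by $\sigma_1^2=\sigma_2^2=\sigma_3^2=1$. In particular, every element of $G$ other than the identity has a unique expression $\sigma_{i_1}\sigma_{i_2}\cdots\sigma_{i_n}$ with $n\ge1$ and $i_\nu\ne i_{\nu+1}$ for all $\nu$.
   Context: Let $\kappa\in\mathcal{K}=\{\kappa\in\mathbb{C}^5:2\kappa_0+\kappa_1+\dots+\kappa_4=1\}$ lie outside $\mathrm{Wall}$ (union of the hyperplanes $\kappa_i=m$, $i=1,\dots,4$, and $\kappa_1\pm\kappa_2\pm\kappa_3\pm\kappa_4=2m+1$, $m\in\mathbb{Z}$), and $\theta=\mathrm{rh}(\kappa)$: $a_i=2\cos\pi\kappa_i$ ($i=1,2,3$), $a_4=-2\cos\pi\kappa_4$, $\theta_i=a_ia_4+a_ja_k$ ($\{i,j,k\}=\{1,2,3\}$), $\theta_4=a_1a_2a_3a_4+\sum_{l=1}^4a_l^2-4$; $\overline{\mathcal{S}}(\theta)\subset\mathbb{P}^3$ is the (smooth) cubic surface $X_1X_2X_3+X_0(X_1^2+X_2^2+X_3^2)-X_0^2(\theta_1X_1+\theta_2X_2+\theta_3X_3)+\theta_4X_0^3=0$. For $\{i,j,k\}=\{1,2,3\}$, $\sigma_i$ is the birational involution of $\overline{\mathcal{S}}(\theta)$ given by $X'_0=X_0^2$, $X'_i=\theta_iX_0^2-X_0X_i-X_jX_k$,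 $X'_j=X_0X_j$, $X'_k=X_0X_k$ (on the affine part $x=(X_1/X_0,X_2/X_0,X_3/X_0)$: $(x_i,x_j,x_k)\mapsto(\theta_i-x_i-x_jx_k,x_j,x_k)$). *)

From mathcomp Require Import all_boot all_order all_algebra.
From mathcomp Require Import all_classical all_reals all_analysis.
From mathcomp Require Export complex.
Set Implicit Arguments. Unset Strict Implicit. Unset Printing Implicit Defensive.
Import Order.TTheory GRing.Theory Num.Theory.
Local Open Scope ring_scope.

Section Defs.
Variable R : realType.
Local Notation C := R[i].

(* complex cosine: cos(a + ib) = cos a cosh b - i sin a sinh b *)
Definition ccos (z : C) : C :=
  let a := complex.Re z in let b := complex.Im z in
  Complex (cos a * ((expR b + expR (- b)) / 2))
          (- (sin a * ((expR b - expR (- b)) / 2))).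

Definition twocospi (k : C) : C := 2 * ccos (Complex (pi : R) 0 * k).

Definition is_int (z : C) : Prop := exists m : int, z = m%:~R.

Definition inWall (k1 k2 k3 k4 : C) : Prop :=
  is_int k1 \/ is_int k2 \/ is_int k3 \/ is_int k4 \/
  exists (e2 e3 e4 : bool) (m : int),
    k1 + (-1) ^+ e2 * k2 + (-1) ^+ e3 * k3 + (-1) ^+ e4 * k4 = (2 * m + 1)%:~R.

(* the Riemann-Hilbert map rh : kappa |-> theta.  Indices 1,2,3 of the
   paper are the ordinals 0,1,2 of 'I_3. *)
Definition rh_a (k1 k2 k3 : C) (i : 'I_3) : C :=
  twocospi (if val i == 0%N then k1 else if val i == 1%N then k2 else k3).

Definition rh_a4 (k4 : C) : C := - twocospi k4.

Definition rh_theta (k1 k2 k3 k4 : C) (i : 'I_3) : C :=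
  rh_a k1 k2 k3 i * rh_a4 k4 + \prod_(j : 'I_3 | j != i) rh_a k1 k2 k3 j.

Definition rh_theta4 (k1 k2 k3 k4 : C) : C :=
  (\prod_(j : 'I_3) rh_a k1 k2 k3 j) * rh_a4 k4
  + (\sum_(j : 'I_3) rh_a k1 k2 k3 j ^+ 2) + rh_a4 k4 ^+ 2 - 4.

(* affine part S(theta) = {X0 <> 0} of the cubic surface, x_i = X_i / X0:
   x1 x2 x3 + x1^2 + x2^2 + x3^2 - th1 x1 - th2 x2 - th3 x3 + th4 = 0 *)
Definition onS (th : 'I_3 -> C) (th4 : C) (x : 'I_3 -> C) : Prop :=
  \prod_(j : 'I_3) x j + \sum_(j : 'I_3) x j ^+ 2
  - \sum_(j : 'I_3) th j * x j + th4 = 0.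

Definition sigma (th : 'I_3 -> C) (i : 'I_3) (x : 'I_3 -> C) : 'I_3 -> C :=
  fun j => if j == i then th i - x i - \prod_(l : 'I_3 | l != i) x l else x j.

(* the element sigma_{i1} sigma_{i2} ... sigma_{in} (composition of maps)
   attached to the word [:: i1; ...; in]; the empty word gives the identity *)
Definition word_act (th : 'I_3 -> C) (w : seq 'I_3) (x : 'I_3 -> C) : 'I_3 -> C :=
  foldr (fun i y => sigma th i y) x w.

End Defs.

Definition reduced_word (w : seq 'I_3) : bool := sorted (fun i j : 'I_3 => i != j) w.

From mathcomp Require Import all_boot all_order all_algebra.
From mathcomp Require Import all_classical all_reals all_analysis.
From mathcomp Require Import complex.
From mathcomp Require Import zify ring lra.
Import Order.TTheory GRing.Theory Num.Theory.
Local Open Scope ring_scope.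
Set Implicit Arguments. Unset Strict Implicit. Unset Printing Implicit Defensive.

(* Ping-pong.  Let T bound |theta_1| + |theta_2| + |theta_3| and call a point
   x a-dominant if |x_j| >= T + 3 and |x_j| < |x_a| for both j <> a.  For
   i <> b, sigma_i maps b-dominant points to i-dominant points, because the
   new coordinate theta_i - x_i - x_b x_k is essentially the product x_b x_k.
   Hence a reduced word w, applied to an a-dominant point with a different
   from the last letter of w, yields a point dominant at the first letter of
   w; the dominant index of a point is unique, and every dominance region
   meets the surface.  Two reduced words with different first letters thus
   act differently on S(theta), and cancelling common first letters with
   sigma_i^2 = 1 reduces the general case to this one. *)

Lemma ord3_avoid2 (i j : 'I_3) : exists k : 'I_3, (k != i) && (k != j).
Proof.
have : (0 < #|[set~ i] :\ j|)%N.
  by have := cardsD1 j [set~ i]; rewrite cardsC1 card_ord /=; lia.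
by case/card_gt0P => k; rewrite !inE andbC; exists k.
Qed.

Lemma ord3_third (i j k l : 'I_3) : i != j -> i != k -> j != k ->
  (l != i) && (l != j) = (l == k).
Proof. by move: i j k l => [[|[|[|?]]] ?] [[|[|[|?]]] ?] [[|[|[|?]]] ?] [[|[|[|?]]] ?]. Qed.

Lemma big_ord3_neq (T : Type) (idx : T) (op : Monoid.com_law idx) (f : 'I_3 -> T)
    (i j k : 'I_3) : i != j -> i != k -> j != k ->
  \big[op/idx]_(l | l != i) f l = op (f j) (f k).
Proof.
move=> ij ik jk; rewrite (bigD1 j) 1?eq_sym //=.
by rewrite (big_pred1 k) // => l; apply: ord3_third.
Qed.

Lemma big_ord3 (T : Type) (idx : T) (op : Monoid.com_law idx) (f : 'I_3 -> T)
    (i j k : 'I_3) : i != j -> i != k -> j != k ->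
  \big[op/idx]_l f l = op (f i) (op (f j) (f k)).
Proof. by move=> ij ik jk; rewrite (bigD1 i) //= (big_ord3_neq op f ij ik jk). Qed.

Lemma reduced_word_rcons (w : seq 'I_3) (d a : 'I_3) :
  reduced_word w -> last d w != a -> reduced_word (rcons w a).
Proof. by case: w => //= i w; rewrite /reduced_word /= rcons_path => ->. Qed.

Section PingPong.
Variable R : realType.
Local Notation C := R[i].
Local Notation normc := (@ComplexField.Normc.normc R).

Lemma normc_ge0 (x : C) : 0 <= normc x.
Proof. by case: x => a b; exact: sqrtr_ge0. Qed.

Lemma normc_real (t : R) : normc (Complex t 0) = `|t|.
Proof. by rewrite /ComplexField.Normc.normc /= expr0n /= addr0 sqrtr_sqr. Qed.

Lemma normc_sigma_gt (T : R) (t xi xj xk : C) :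
  normc t <= T -> T + 3 <= normc xk -> normc xk < normc xj ->
  normc xi < normc xj -> normc xj < normc (t - xi - xj * xk).
Proof.
move=> tT Tk kj ij.
have tri : normc (xj * xk) <= normc (t - xi - xj * xk) + (normc t + normc xi).
  have := le_normcD (- (t - xi - xj * xk)) (t - xi).
  have -> : - (t - xi - xj * xk) + (t - xi) = xj * xk by ring.
  rewrite normcN => /le_trans; apply; rewrite lerD2l.
  by have := le_normcD t (- xi); rewrite normcN.
rewrite ComplexField.Normc.normcM in tri.
have := ler_wpM2l (normc_ge0 xj) Tk.
have := normc_ge0 xi; have := normc_ge0 t.
nra.
Qed.

(* Of the two roots r, s - r, one has modulus at least |s| / 2. *)
Lemma quadratic_root_normc (s c : C) :
  exists2 r : C, r ^+ 2 - s * r + c = 0 & normc s <= 2 * normc r.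
Proof.
pose d := sqrtc (s ^+ 2 - 4 * c).
have root e : e ^+ 2 = s ^+ 2 - 4 * c ->
    ((s + e) / 2) ^+ 2 - s * ((s + e) / 2) + c = 0.
  have h2 : (2 : C) != 0 by rewrite pnatr_eq0.
  have h4 : (4 : C) != 0 by rewrite pnatr_eq0.
  move=> he; have -> : ((s + e) / 2) ^+ 2 - s * ((s + e) / 2) + c
                       = (e ^+ 2 - (s ^+ 2 - 4 * c)) / 4 by field.
  by rewrite he subrr mul0r.
have [le_s|lt_s] := lerP (normc s) (2 * normc ((s + d) / 2)).
  by exists ((s + d) / 2) => //; apply: root; rewrite sqr_sqrtc.
exists ((s + - d) / 2); first by apply: root; rewrite sqrrN sqr_sqrtc.
have := le_normcD ((s + d) / 2) ((s + - d) / 2).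
have -> : (s + d) / 2 + (s + - d) / 2 = s by field.
lra.
Qed.

Section Surface.
Variables (th : 'I_3 -> C) (th4 : C).

Let T := \sum_(i < 3) normc (th i).

Definition dominant (a : 'I_3) (x : 'I_3 -> C) :=
  forall j, j != a -> T + 3 <= normc (x j) /\ normc (x j) < normc (x a).

Lemma normc_th_le i : normc (th i) <= T.
Proof.
by rewrite /T (bigD1 i) //= lerDl; apply: sumr_ge0 => j _; exact: normc_ge0.
Qed.

Lemma sigma_same x i : sigma th i x i = th i - x i - \prod_(l | l != i) x l.
Proof. by rewrite /sigma eqxx. Qed.

Lemma sigma_other x i j : j != i -> sigma th i x j = x j.
Proof. by move=> ji; rewrite /sigma (negbTE ji). Qed.

Lemma sigmaK i : involutive (sigma th i).
Proof.
move=> x; apply: funext => j; have [->|ji] := eqVneq j i; last by rewrite !sigma_other.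
rewrite sigma_same.
have -> : \prod_(l | l != i) sigma th i x l = \prod_(l | l != i) x l.
  by apply: eq_bigr => l li; rewrite sigma_other.
rewrite !sigma_same; ring.
Qed.

Lemma dominant_sigma b i x : dominant b x -> i != b -> dominant i (sigma th i x).
Proof.
move=> dom_b ib; have [k /andP [ki kb]] := ord3_avoid2 i b.
have [Tk kb_lt] := dom_b k kb; have [_ ib_lt] := dom_b i ib.
have b_lt : normc (x b) < normc (sigma th i x i).
  rewrite sigma_same (big_ord3_neq _ _ ib (_ : i != k)) 1?eq_sym //.
  exact: normc_sigma_gt (normc_th_le i) Tk kb_lt ib_lt.
move=> j ji; rewrite sigma_other //; have [->|jb] := eqVneq j b.
  by split=> //; lra.
have /eqP -> : j == k by rewrite -(ord3_third j ib (_ : i != k)) ?ji ?jb // eq_sym.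
by split=> //; apply: lt_trans b_lt.
Qed.

Lemma dominant_word_act a x w : dominant a x -> reduced_word (rcons w a) ->
  dominant (head a w) (word_act th w x).
Proof.
move=> dom_a; elim: w => [_|i w IH]; first exact: dom_a.
move=> /[dup] /path_sorted /IH dom_w.
by case: w {IH} dom_w => [|j w] dom_w /= /andP [ij _]; apply: dominant_sigma dom_w ij.
Qed.

Lemma dominant_uniq a b x : dominant a x -> dominant b x -> a = b.
Proof.
move=> dom_a dom_b; have [//|ab] := eqVneq a b.
have ba : b != a by rewrite eq_sym.
by have := lt_trans (dom_a b ba).2 (dom_b a ab).2; rewrite ltxx.
Qed.

(* Take x_j = T + 3 for j <> a and solve the equation of S(theta), quadratic
   in x_a, for a root of large modulus. *)
Lemma exists_onS_dominant a : exists2 x, onS th th4 x & dominant a x.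
Proof.
have [b /andP [ba _]] := ord3_avoid2 a a.
have [k /andP [ka kb]] := ord3_avoid2 a b.
have ab : a != b by rewrite eq_sym.
have ak : a != k by rewrite eq_sym.
have bk : b != k by rewrite eq_sym.
pose t := T + 3; pose tc : C := Complex t 0.
pose s := th a - tc ^+ 2.
have [r r_root r_large] :=
  quadratic_root_normc s (2 * tc ^+ 2 - (th b + th k) * tc + th4).
exists (fun l => if l == a then r else tc).
  rewrite /onS (big_ord3 _ _ ab ak bk) (big_ord3 _ _ ab ak bk).
  rewrite (big_ord3 _ _ ab ak bk) eqxx (negbTE ba) (negbTE ka).
  by apply: etrans r_root; rewrite /s /=; ring.
have T_ge0 : 0 <= T by apply: le_trans (normc_th_le a); exact: normc_ge0.
have normc_tc : normc tc = t by rewrite normc_real ger0_norm // /t; lra.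
have s_large : t * t <= normc (th a) + normc s.
  have := le_normcD (th a) (- s).
  have -> : th a + - s = tc * tc by rewrite /s; ring.
  by rewrite normcN ComplexField.Normc.normcM normc_tc.
move=> j ja; rewrite (negbTE ja) eqxx normc_tc; split; first exact: lexx.
by have := normc_th_le a; rewrite /t in s_large *; nra.
Qed.

Lemma reduced_words_separated w1 w2 : reduced_word w1 -> reduced_word w2 ->
  ohead w1 != ohead w2 ->
  exists2 x, onS th th4 x & word_act th w1 x != word_act th w2 x.
Proof.
wlog w2_cons : w1 w2 / w2 != [::] => [sym red1 red2 heads|].
  have [w2_nil|] := eqVneq w2 [::]; last by move/sym; apply.
  have w1_cons : w1 != [::] by apply: contraNneq heads => ->; rewrite w2_nil.
  have [|x Sx ne] := sym w2 w1 w1_cons red2 red1; first by rewrite eq_sym.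
  by exists x; rewrite // eq_sym.
case: w2 w2_cons => // i2 w2 _ red1 red2 heads.
have [a /andP [a1 a2]] := ord3_avoid2 (last i2 w1) (last i2 w2).
have [x Sx dom_a] := exists_onS_dominant a.
exists x => //; apply/eqP => act_eq.
have red1a : reduced_word (rcons w1 a).
  by rewrite (@reduced_word_rcons _ i2) // eq_sym.
have red2a : reduced_word (rcons (i2 :: w2) a).
  by rewrite (@reduced_word_rcons _ i2) // eq_sym.
have dom1 := dominant_word_act dom_a red1a; rewrite act_eq in dom1.
have /= := dominant_uniq dom1 (dominant_word_act dom_a red2a).
case: w1 {red1 red1a dom1 act_eq} heads a1 => [_ /eqP a_i2 | j w1 heads _ j_i2].
  exact: a_i2.
by rewrite -j_i2 eqxx in heads.
Qed.
End Surface.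
End PingPong.

Theorem theorem7p7 (R : realType) (k0 k1 k2 k3 k4 : R[i])
    (hK : 2 * k0 + k1 + k2 + k3 + k4 = 1)
    (hW : ~ inWall k1 k2 k3 k4) :
  let th := rh_theta k1 k2 k3 k4 in
  let th4 := rh_theta4 k1 k2 k3 k4 in
  (* the defining relations sigma_i^2 = 1 hold in G *)
  (forall (i : 'I_3) (x : 'I_3 -> R[i]), onS th th4 x ->
      sigma th i (sigma th i x) = x) /\
  (* no other relations: two reduced words define the same birational
     transformation only if they coincide (in particular a nonempty reduced
     word is never the identity) *)
  (forall w1 w2 : seq 'I_3, reduced_word w1 -> reduced_word w2 ->
      (forall x : 'I_3 -> R[i], onS th th4 x -> word_act th w1 x = word_act th w2 x) ->
      w1 = w2).
Proof.
move=> th th4; split=> [i x _|]; first exact: sigmaK.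
have heads_eq w1 w2 : reduced_word w1 -> reduced_word w2 ->
    (forall x, onS th th4 x -> word_act th w1 x = word_act th w2 x) ->
    ohead w1 = ohead w2.
  move=> red1 red2 act_eq; apply/eqP/negPn/negP.
  by case/(reduced_words_separated th th4 red1 red2) => x /act_eq ->; rewrite eqxx.
elim=> [|i w1 IH] w2 red1 red2 act_eq; have := heads_eq _ _ red1 red2 act_eq.
  by case: w2 {red2 act_eq}.
case: w2 red2 act_eq => // j w2 red2 act_eq [ij]; subst j; congr (_ :: _).
apply: IH (path_sorted red1) (path_sorted red2) _ => x Sx.
by have /= := congr1 (sigma th i) (act_eq x Sx); rewrite !sigmaK.
Qed.
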